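(* Let $0 < a < 1$. Then \[ (1-a)\left(\frac1{a} + \frac{\pi^2}{6} - 1\right) < \psi(1) - \psi(a) < (1-a)\left(\frac1{a} + 1\right). \]
   Context: $\psi=\Gamma'/\Gamma$ is the digamma function. *)

From Stdlib Require Import Reals.
From Coquelicot Require Import Coquelicot.
Open Scope R_scope.

Definition Gamma (x : R) : R :=
  RInt_gen (fun t => Rpower t (x - 1) * exp (- t)) (at_right 0) (Rbar_locally p_infty).

Definition digamma (x : R) : R := Derive Gamma x / Gamma x.

From Stdlib Require Import Reals Lra Lia Classical.
From Coquelicot Require Import Coquelicot.
Open Scope R_scope.
Set Bullet Behavior "Strict Subproofs".

(* By [psi (a + 1) = psi a + 1 / a] the claim reads
   [a < psi (a + 1) - psi 1 < 1 - (1 - a) (pi^2 / 6 - 1)].  Telescoping the same recursion gives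
   [psi (a + 1) - psi 1 = sum_(k >= 1) a / (k (k + a))], the tail after N terms lying in
   [0, 1 / (N + 1)] because psi is nondecreasing: Gamma is log-convex, by Cauchy-Schwarz on its
   integral.  The lower bound compares [a / (k (k + a))] with [a / (k (k + 1))] for [k >= 2]; the
   upper bound pairs [a / (k (k + a))] with [(1 - a) / (k + 1)^2], whose sum is at most
   [1 / k - 1 / (k + 1)], and uses Matsuoka's estimate [pi^2 / 6 <= sum_(k <= N) 1 / k^2 + 9 / (N + 1)].
   Convergence, the functional equation and the differentiability of the Gamma integral all follow
   from domination of the integrands by [C t^(s - 1)] near 0 and [C exp (- t / 2)] near infinity. *)

(** * Improper integrals over (0, +oo) *)

Definition continuous_on_pos (f : R -> R) := forall t, 0 < t -> continuous f t.

Lemma ex_RInt_pos f a b : continuous_on_pos f -> 0 < a -> 0 < b -> ex_RInt f a b.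
Proof.
  intros Hf Ha Hb. apply (ex_RInt_continuous (V := R_CompleteNormedModule)). intros t [Ht _]. apply Hf.
  unfold Rmin in Ht. destruct (Rle_dec a b); lra.
Qed.

Lemma RInt_subinterval_le f a b c d : continuous_on_pos f ->
  (forall t, 0 < t -> 0 <= f t) -> 0 < a -> a <= c -> c <= d -> d <= b ->
  RInt f c d <= RInt f a b.
Proof.
  intros Hc Hpos Ha Hac Hcd Hdb.
  assert (Hnonneg : forall u v, 0 < u -> u <= v -> 0 <= RInt f u v).
  { intros u v Hu Huv. apply RInt_ge_0; [lra | apply ex_RInt_pos; auto; lra |].
    intros t Ht. apply Hpos. lra. }
  rewrite <- (RInt_Chasles f a c b), <- (RInt_Chasles f c d b)
    by (apply ex_RInt_pos; auto; lra).
  pose proof (Hnonneg a c Ha Hac). pose proof (Hnonneg d b ltac:(lra) Hdb).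
  change plus with Rplus. simpl. lra.
Qed.

Lemma is_RInt_gen_nonneg_bounded f B : continuous_on_pos f ->
  (forall t, 0 < t -> 0 <= f t) ->
  (forall a b, 0 < a -> a <= b -> RInt f a b <= B) ->
  exists l, is_RInt_gen f (at_right 0) (Rbar_locally p_infty) l.
Proof.
  intros Hc Hpos HB.
  set (E := fun v => exists a b, 0 < a /\ a <= b /\ v = RInt f a b).
  assert (HEb : bound E) by (exists B; intros v (a & b & Ha & Hab & ->); auto).
  assert (HEne : exists v, E v) by (exists (RInt f 1 1), 1, 1; repeat split; lra).
  destruct (completeness E HEb HEne) as [m [Hub Hlub]].
  exists m. intros P [eps Heps].
  assert (Happrox : exists a0 b0, 0 < a0 /\ a0 <= b0 /\ m - eps < RInt f a0 b0).
  { apply NNPP. intros Hn.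
    assert (Hm : is_upper_bound E (m - eps)).
    { intros v (a & b & Ha & Hab & ->). apply Rnot_lt_le. intros Hlt.
      apply Hn. exists a, b. auto. }
    pose proof (Hlub _ Hm). destruct eps; simpl in *; lra. }
  destruct Happrox as (a0 & b0 & Ha0 & Hab0 & Hm).
  apply Filter_prod with (fun a => 0 < a <= a0) (fun b => b0 <= b).
  - exists (mkposreal a0 Ha0). intros y Hy Hy0.
    change (Rabs (y - 0) < a0) in Hy. apply Rabs_lt_between in Hy. lra.
  - exists b0. intros; lra.
  - intros a b [Ha Haa0] Hbb0. simpl. exists (RInt f a b). split.
    + apply (RInt_correct (V := R_CompleteNormedModule)), ex_RInt_pos; auto; lra.
    + apply Heps. change (Rabs (RInt f a b - m) < eps). apply Rabs_lt_between.
      assert (RInt f a b <= m) by (apply Hub; exists a, b; repeat split; lra).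
      pose proof (RInt_subinterval_le f a b a0 b0 Hc Hpos Ha Haa0 Hab0 Hbb0).
      lra.
Qed.

Definition cut_lo (n : nat) := / (INR n + 1).
Definition cut_hi (n : nat) := INR n + 1.

Lemma cut_lo_pos n : 0 < cut_lo n.
Proof. unfold cut_lo. apply Rinv_0_lt_compat. pose proof (pos_INR n). lra. Qed.

Lemma cut_hi_ge1 n : 1 <= cut_hi n.
Proof. unfold cut_hi. pose proof (pos_INR n). lra. Qed.

Lemma cut_lo_le_hi n : cut_lo n <= cut_hi n.
Proof.
  pose proof (cut_hi_ge1 n). unfold cut_lo. fold (cut_hi n).
  enough (/ cut_hi n <= / 1) by (rewrite Rinv_1 in *; lra).
  apply Rinv_le_contravar; lra.
Qed.

Lemma is_RInt_gen_lim_seq f l :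
  is_RInt_gen f (at_right 0) (Rbar_locally p_infty) l ->
  is_lim_seq (fun n => RInt f (cut_lo n) (cut_hi n)) l.
Proof.
  intros H. apply is_lim_seq_Reals. intros eps Heps.
  destruct (H _ (locally_ball l (mkposreal eps Heps))) as [P Q [d Hd] [M HM] HPQ].
  destruct (INR_archimed 1 (Rmax M (/ d)) Rlt_0_1) as [N HN].
  rewrite Rmult_1_r in HN.
  exists N. intros n Hn.
  assert (HnN : INR N <= INR n) by (apply le_INR; lia).
  pose proof (cond_pos d). pose proof (pos_INR n).
  pose proof (Rmax_l M (/ d)). pose proof (Rmax_r M (/ d)).
  assert (HP : P (cut_lo n)).
  { apply Hd; [| apply cut_lo_pos]. change (Rabs (cut_lo n - 0) < d).
    pose proof (cut_lo_pos n). rewrite Rminus_0_r, Rabs_pos_eq by lra.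
    unfold cut_lo. rewrite <- (Rinv_inv d).
    apply Rinv_lt_contravar; [apply Rmult_lt_0_compat |]; try apply Rinv_0_lt_compat; lra. }
  assert (HQ : Q (cut_hi n)) by (apply HM; unfold cut_hi; lra).
  destruct (HPQ _ _ HP HQ) as [y [Hy Hball]]. simpl in Hy.
  rewrite (is_RInt_unique _ _ _ _ Hy). exact Hball.
Qed.

Record dominated (f : R -> R) (C s : R) : Prop := {
  dominated_exponent_pos : 0 < s;
  dominated_const_nonneg : 0 <= C;
  dominated_continuous : continuous_on_pos f;
  dominated_near_0 : forall t, 0 < t <= 1 -> Rabs (f t) <= C * Rpower t (s - 1);
  dominated_near_infty : forall t, 1 <= t -> Rabs (f t) <= C * exp (- t / 2) }.

Lemma continuous_on_pos_Rpower p : continuous_on_pos (fun t => Rpower t p).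
Proof.
  intros t Ht. unfold Rpower.
  apply (ex_derive_continuous (K := R_AbsRing) (V := R_NormedModule)). auto_derive. lra.
Qed.

Lemma continuous_exp_half t : continuous (fun t => exp (- t / 2)) t.
Proof.
  apply (ex_derive_continuous (K := R_AbsRing) (V := R_NormedModule)). auto_derive. easy.
Qed.

Lemma RInt_Rpower_le s a : 0 < s -> 0 < a <= 1 -> RInt (fun t => Rpower t (s - 1)) a 1 <= / s.
Proof.
  intros Hs Ha.
  assert (H : is_RInt (fun t => Rpower t (s - 1)) a 1
                (minus (Rpower 1 s / s) (Rpower a s / s))).
  { apply (is_RInt_derive (fun t => Rpower t s / s)).
    - intros t Ht. assert (0 < t) by (rewrite Rmin_left in Ht; lra).
      unfold Rpower. auto_derive; [lra |].
      replace ((s - 1) * ln t) with (s * ln t + - ln t) by ring.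
      rewrite exp_plus, exp_Ropp, exp_ln by lra. field. lra.
    - intros t Ht. apply continuous_on_pos_Rpower. rewrite Rmin_left in Ht; lra. }
  rewrite (is_RInt_unique _ _ _ _ H). unfold Rpower. rewrite ln_1, Rmult_0_r, exp_0.
  pose proof (exp_pos (s * ln a)).
  unfold minus, plus, opp. simpl. unfold Rdiv.
  pose proof (Rinv_0_lt_compat s Hs). nra.
Qed.

Lemma RInt_exp_half_le b : RInt (fun t => exp (- t / 2)) 1 b <= 2.
Proof.
  assert (H : is_RInt (fun t => exp (- t / 2)) 1 b
                (minus (-2 * exp (- b / 2)) (-2 * exp (- 1 / 2)))).
  { apply (is_RInt_derive (fun t => -2 * exp (- t / 2))).
    - intros t _. auto_derive; [easy |]. unfold Rdiv. field.
    - intros t _. apply continuous_exp_half. }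
  rewrite (is_RInt_unique _ _ _ _ H). unfold minus, plus, opp. simpl.
  pose proof (exp_pos (- b / 2)).
  assert (exp (- 1 / 2) < 1) by (rewrite <- exp_0; apply exp_increasing; lra).
  lra.
Qed.

Section Dominated.

Variables (f : R -> R) (C s : R).
Hypothesis Hdom : dominated f C s.

Lemma RInt_abs_dominated_le a b : 0 < a -> a <= b ->
  RInt (fun t => Rabs (f t)) a b <= C * (/ s + 2).
Proof.
  destruct Hdom as [Hs HC Hc H0 Hinf]. intros Ha Hab.
  set (g := fun t => Rabs (f t)).
  assert (Hgc : continuous_on_pos g) by (intros t Ht; apply continuous_Rabs_comp, Hc, Ht).
  set (a' := Rmin a 1). set (b' := Rmax b 1).
  assert (Ha' : 0 < a' <= 1) by (unfold a', Rmin; destruct (Rle_dec a 1); lra).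
  assert (Hb' : 1 <= b') by apply Rmax_r.
  assert (Haa' : a' <= a) by apply Rmin_l. assert (Hbb' : b <= b') by apply Rmax_l.
  assert (Hnear0 : RInt g a' 1 <= C * / s).
  { apply Rle_trans with (RInt (fun t => C * Rpower t (s - 1)) a' 1).
    - apply RInt_le; [lra | apply ex_RInt_pos; auto; lra | |].
      + apply ex_RInt_pos; try lra. intros t Ht.
        apply (continuous_scal_r (V := R_NormedModule) C (fun t => Rpower t (s - 1))).
        apply continuous_on_pos_Rpower, Ht.
      + intros t Ht. apply H0. lra.
    - rewrite (RInt_scal (V := R_CompleteNormedModule) (fun t => Rpower t (s - 1)))
        by (apply ex_RInt_pos; [apply continuous_on_pos_Rpower | lra | lra]).
      apply Rmult_le_compat_l; [lra | apply RInt_Rpower_le; lra]. }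
  assert (Hnear_infty : RInt g 1 b' <= C * 2).
  { apply Rle_trans with (RInt (fun t => C * exp (- t / 2)) 1 b').
    - apply RInt_le; [lra | apply ex_RInt_pos; auto; lra | |].
      + apply (ex_RInt_continuous (V := R_CompleteNormedModule)). intros t _.
        apply (continuous_scal_r (V := R_NormedModule) C (fun t => exp (- t / 2))), continuous_exp_half.
      + intros t Ht. apply Hinf. lra.
    - rewrite (RInt_scal (V := R_CompleteNormedModule) (fun t => exp (- t / 2)))
        by (apply (ex_RInt_continuous (V := R_CompleteNormedModule));
            intros; apply continuous_exp_half).
      apply Rmult_le_compat_l; [lra | apply RInt_exp_half_le]. }
  apply Rle_trans with (RInt g a' b').
  - apply RInt_subinterval_le; auto; try lra. intros; apply Rabs_pos.
  - rewrite <- (RInt_Chasles g a' 1 b') by (apply ex_RInt_pos; auto; lra).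
    change plus with Rplus. simpl. lra.
Qed.

Lemma abs_RInt_dominated_le a b : 0 < a -> a <= b -> Rabs (RInt f a b) <= C * (/ s + 2).
Proof.
  intros Ha Hab. eapply Rle_trans; [apply abs_RInt_le; auto |].
  - apply ex_RInt_pos; [apply Hdom | lra | lra].
  - apply RInt_abs_dominated_le; auto.
Qed.

End Dominated.

Lemma dominated_ex_RInt_gen f C s : dominated f C s ->
  exists l, is_RInt_gen f (at_right 0) (Rbar_locally p_infty) l.
Proof.
  intros Hd. pose proof Hd as [Hs HC Hc H0 Hinf].
  set (g := fun t => f t + Rabs (f t)).
  assert (Hac : continuous_on_pos (fun t => Rabs (f t)))
    by (intros t Ht; apply continuous_Rabs_comp, Hc, Ht).
  assert (Hgd : dominated g (2 * C) s).
  { split; try lra.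
    - intros t Ht. apply (continuous_plus f); auto.
    - intros t Ht. unfold g. eapply Rle_trans; [apply Rabs_triang |].
      rewrite Rabs_Rabsolu. specialize (H0 t Ht). lra.
    - intros t Ht. unfold g. eapply Rle_trans; [apply Rabs_triang |].
      rewrite Rabs_Rabsolu. specialize (Hinf t Ht). lra. }
  destruct (is_RInt_gen_nonneg_bounded g (2 * C * (/ s + 2))) as [l1 Hl1].
  { apply Hgd. }
  { intros t _. unfold g. pose proof (Rabs_maj2 (f t)). lra. }
  { intros a b Ha Hab. pose proof (abs_RInt_dominated_le g _ _ Hgd a b Ha Hab).
    pose proof (Rle_abs (RInt g a b)). lra. }
  destruct (is_RInt_gen_nonneg_bounded (fun t => Rabs (f t)) (C * (/ s + 2))) as [l2 Hl2];
    auto using Rabs_pos, RInt_abs_dominated_le.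
  exists (minus l1 l2).
  eapply is_RInt_gen_ext; [| exact (is_RInt_gen_minus _ _ _ _ Hl1 Hl2)].
  apply filter_forall. intros ab t _. unfold g, minus, plus, opp. simpl. ring.
Qed.

(** * The Gamma integral *)

Lemma exp_le_exp_of_le x y : x <= y -> exp x <= exp y.
Proof. intros [H | ->]; [left; apply exp_increasing |]; lra. Qed.

Lemma exp_opp_le_1 t : 0 <= t -> exp (- t) <= 1.
Proof. intros Ht. rewrite <- exp_0. apply exp_le_exp_of_le. lra. Qed.

Lemma Rpower_pos t p : 0 < Rpower t p.
Proof. apply exp_pos. Qed.

Lemma Rpower_sqr t p : Rpower t p ^ 2 = Rpower t (2 * p).
Proof. unfold Rpower. simpl. rewrite Rmult_1_r, <- exp_plus. f_equal. ring. Qed.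

Lemma ln_le_sub_1 z : 0 < z -> ln z <= z - 1.
Proof. intros Hz. pose proof (exp_ineq1_le (ln z)). rewrite exp_ln in H by auto. lra. Qed.

Lemma ln_bounds_ge_1 t : 1 <= t -> 0 <= ln t <= t.
Proof.
  intros Ht. split; [rewrite <- ln_1; apply ln_le; lra |].
  pose proof (ln_le_sub_1 t). lra.
Qed.

Lemma opp_ln_le_Rpower t eps : 0 < t <= 1 -> 0 < eps -> - ln t <= Rpower t (- eps) / eps.
Proof.
  intros Ht He. unfold Rpower. pose proof (exp_ineq1_le (- eps * ln t)).
  apply (Rmult_le_reg_l eps); auto.
  replace (eps * (exp (- eps * ln t) / eps)) with (exp (- eps * ln t)) by (field; lra).
  assert (ln t <= 0) by (rewrite <- ln_1; apply ln_le; lra). nra.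
Qed.

Definition rpow_exp_const (p : R) := Rpower (2 * (Rabs p + 1)) (Rabs p + 1).

(* With q = |p| + 1, the inequality [ln u <= u - 1] at [u = t / (2 q)] gives
   [q ln t <= t / 2 + q ln (2 q) - q]. *)
Lemma Rpower_mul_exp_le p t : 1 <= t ->
  Rpower t p * exp (- t) <= rpow_exp_const p * exp (- t / 2).
Proof.
  intros Ht. unfold rpow_exp_const, Rpower. set (q := Rabs p + 1).
  assert (Hq : 1 <= q) by (unfold q; pose proof (Rabs_pos p); lra).
  assert (Hl : 0 <= ln t) by apply (ln_bounds_ge_1 t Ht).
  assert (Hpq : p * ln t <= q * ln t).
  { apply Rmult_le_compat_r; auto. unfold q. pose proof (Rle_abs p). lra. }
  assert (Hsplit : ln t = ln (t / (2 * q)) + ln (2 * q)).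
  { rewrite <- ln_mult by (try apply Rdiv_lt_0_compat; lra). f_equal. field. lra. }
  assert (Hu : ln (t / (2 * q)) <= t / (2 * q) - 1)
    by (apply ln_le_sub_1, Rdiv_lt_0_compat; lra).
  assert (Hqu : q * ln (t / (2 * q)) <= q * (t / (2 * q) - 1)) by (apply Rmult_le_compat_l; lra).
  replace (q * (t / (2 * q) - 1)) with (t / 2 - q) in Hqu by (field; lra).
  rewrite <- !exp_plus. apply exp_le_exp_of_le. rewrite Hsplit in *. lra.
Qed.

Lemma exp_taylor1_remainder_le u : Rabs (exp u - 1 - u) <= u ^ 2 * exp (Rabs u).
Proof.
  pose proof (exp_ineq1_le u) as Hu. pose proof (exp_ineq1_le (- u)) as Hnu.
  assert (Hinv : exp u * exp (- u) = 1) by (rewrite <- exp_plus, Rplus_opp_r; apply exp_0).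
  pose proof (exp_pos u). pose proof (exp_pos (- u)).
  rewrite Rabs_pos_eq by lra.
  destruct (Rle_dec 0 u) as [Hu0 | Hu0].
  - rewrite Rabs_pos_eq by lra.
    assert (exp u * (1 - u) <= exp u * exp (- u)) by (apply Rmult_le_compat_l; lra).
    assert (u * (exp u - 1) <= u * (u * exp u)) by (apply Rmult_le_compat_l; nra).
    nra.
  - rewrite Rabs_left by lra.
    assert (exp u * (1 - u) <= exp u * exp (- u)) by (apply Rmult_le_compat_l; lra).
    assert (- u * (1 - exp u) <= - u * - u) by (apply Rmult_le_compat_l; nra).
    assert (u ^ 2 * 1 <= u ^ 2 * exp (- u)) by (apply Rmult_le_compat_l; nra).
    nra.
Qed.

Definition gamma_integrand (x t : R) := Rpower t (x - 1) * exp (- t).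
Definition gamma_integrand_dx (x t : R) := Rpower t (x - 1) * ln t * exp (- t).
Definition gamma_integrand_rem (x h t : R) :=
  gamma_integrand (x + h) t - gamma_integrand x t - h * gamma_integrand_dx x t.

Lemma gamma_integrand_pos x t : 0 < gamma_integrand x t.
Proof. apply Rmult_lt_0_compat; apply exp_pos. Qed.

Lemma continuous_on_pos_gamma_integrand x : continuous_on_pos (gamma_integrand x).
Proof.
  intros t Ht. unfold gamma_integrand, Rpower.
  apply (ex_derive_continuous (K := R_AbsRing) (V := R_NormedModule)). auto_derive. lra.
Qed.

Lemma continuous_on_pos_gamma_integrand_dx x : continuous_on_pos (gamma_integrand_dx x).
Proof.
  intros t Ht. unfold gamma_integrand_dx, Rpower.
  apply (ex_derive_continuous (K := R_AbsRing) (V := R_NormedModule)). auto_derive. lra.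
Qed.

Lemma continuous_on_pos_gamma_integrand_rem x h : continuous_on_pos (gamma_integrand_rem x h).
Proof.
  intros t Ht. unfold gamma_integrand_rem, gamma_integrand, gamma_integrand_dx, Rpower.
  apply (ex_derive_continuous (K := R_AbsRing) (V := R_NormedModule)).
  auto_derive. repeat split; lra.
Qed.

Lemma dominated_gamma_integrand x : 0 < x ->
  dominated (gamma_integrand x) (1 + rpow_exp_const (x - 1)) x.
Proof.
  intros Hx. assert (HK : 0 < rpow_exp_const (x - 1)) by apply Rpower_pos.
  split; [lra | lra | apply continuous_on_pos_gamma_integrand | |];
    intros t Ht; unfold gamma_integrand;
    pose proof (Rpower_pos t (x - 1)); pose proof (exp_pos (- t));
    rewrite Rabs_pos_eq by nra.
  - pose proof (exp_opp_le_1 t ltac:(lra)). nra.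
  - pose proof (Rpower_mul_exp_le (x - 1) t Ht). pose proof (exp_pos (- t / 2)). nra.
Qed.

Lemma dominated_gamma_integrand_dx x : 0 < x ->
  dominated (gamma_integrand_dx x) (2 / x + rpow_exp_const x) (x / 2).
Proof.
  intros Hx. assert (HK : 0 < rpow_exp_const x) by apply Rpower_pos.
  assert (H2x : 0 < 2 / x) by (apply Rdiv_lt_0_compat; lra).
  split; [lra | lra | apply continuous_on_pos_gamma_integrand_dx | |];
    intros t Ht; unfold gamma_integrand_dx;
    set (A := Rpower t (x - 1)); assert (HA : 0 < A) by apply Rpower_pos;
    pose proof (exp_pos (- t)); pose proof (exp_opp_le_1 t ltac:(lra));
    rewrite !Rabs_mult, (Rabs_pos_eq A), (Rabs_pos_eq (exp (- t))) by lra.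
  - assert (Hl : ln t <= 0) by (rewrite <- ln_1; apply ln_le; lra).
    rewrite Rabs_left1 by lra.
    pose proof (opp_ln_le_Rpower t (x / 2) Ht ltac:(lra)) as Hln.
    assert (Hpow : A * (Rpower t (- (x / 2)) / (x / 2)) = 2 / x * Rpower t (x / 2 - 1)).
    { unfold A. replace (x / 2 - 1) with ((x - 1) + - (x / 2)) by field.
      rewrite Rpower_plus. field. lra. }
    pose proof (Rpower_pos t (x / 2 - 1)).
    assert (A * - ln t <= A * (Rpower t (- (x / 2)) / (x / 2))) by (apply Rmult_le_compat_l; lra).
    assert (0 <= A * - ln t) by nra.
    assert (A * - ln t * exp (- t) <= A * - ln t) by nra.
    nra.
  - destruct (ln_bounds_ge_1 t Ht) as [Hl0 Hlt]. rewrite Rabs_pos_eq by lra.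
    assert (Hpow : A * t = Rpower t x).
    { unfold A. rewrite <- (Rpower_1 t) at 2 by lra. rewrite <- Rpower_plus. f_equal. ring. }
    pose proof (Rpower_mul_exp_le x t Ht). pose proof (exp_pos (- t / 2)).
    assert (A * ln t * exp (- t) <= A * t * exp (- t)) by (apply Rmult_le_compat_r; nra).
    nra.
Qed.

Lemma gamma_integrand_rem_eq x h t :
  gamma_integrand_rem x h t = gamma_integrand x t * (exp (h * ln t) - 1 - h * ln t).
Proof.
  unfold gamma_integrand_rem, gamma_integrand, gamma_integrand_dx.
  replace (x + h - 1) with ((x - 1) + h) by ring. rewrite Rpower_plus. unfold Rpower at 2. ring.
Qed.

Lemma abs_gamma_integrand_rem_le x h t : Rabs (gamma_integrand_rem x h t) <=
  h ^ 2 * (gamma_integrand x t * ln t ^ 2 * exp (Rabs h * Rabs (ln t))).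
Proof.
  rewrite gamma_integrand_rem_eq, Rabs_mult, (Rabs_pos_eq (gamma_integrand x t))
    by (left; apply gamma_integrand_pos).
  pose proof (gamma_integrand_pos x t).
  pose proof (exp_taylor1_remainder_le (h * ln t)) as Htaylor.
  rewrite Rabs_mult in Htaylor.
  replace (h ^ 2 * (gamma_integrand x t * ln t ^ 2 * exp (Rabs h * Rabs (ln t))))
    with (gamma_integrand x t * ((h * ln t) ^ 2 * exp (Rabs h * Rabs (ln t)))) by ring.
  apply Rmult_le_compat_l; lra.
Qed.

Lemma gamma_integrand_rem_near_0 x h t : 0 < x -> Rabs h <= x / 4 -> 0 < t <= 1 ->
  Rabs (gamma_integrand_rem x h t) <= h ^ 2 * (64 / x ^ 2) * Rpower t (x / 2 - 1).
Proof.
  intros Hx Hh Ht. eapply Rle_trans; [apply abs_gamma_integrand_rem_le |].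
  assert (Hl : ln t <= 0) by (rewrite <- ln_1; apply ln_le; lra).
  rewrite (Rabs_left1 (ln t)) by lra.
  set (B := Rpower t (- (x / 4))). assert (HB : 0 < B) by apply Rpower_pos.
  assert (Hln2 : ln t ^ 2 <= 64 / x ^ 2 * B).
  { pose proof (opp_ln_le_Rpower t (x / 8) Ht ltac:(lra)).
    replace (ln t ^ 2) with ((- ln t) ^ 2) by ring.
    apply Rle_trans with ((Rpower t (- (x / 8)) / (x / 8)) ^ 2); [apply pow_incr; lra |].
    right. unfold B. replace (- (x / 4)) with (2 * - (x / 8)) by field.
    rewrite <- Rpower_sqr. field. lra. }
  assert (Hexp : exp (Rabs h * - ln t) <= B).
  { apply exp_le_exp_of_le. pose proof (Rabs_pos h). nra. }
  assert (Hg : gamma_integrand x t <= Rpower t (x - 1)).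
  { unfold gamma_integrand. pose proof (exp_opp_le_1 t ltac:(lra)).
    pose proof (Rpower_pos t (x - 1)). nra. }
  assert (HB2 : Rpower t (x - 1) * B * B = Rpower t (x / 2 - 1)).
  { unfold B. rewrite <- !Rpower_plus. f_equal. field. }
  pose proof (gamma_integrand_pos x t). pose proof (exp_pos (Rabs h * - ln t)).
  replace (h ^ 2 * (64 / x ^ 2) * Rpower t (x / 2 - 1))
    with (h ^ 2 * (Rpower t (x - 1) * (64 / x ^ 2 * B) * B)) by (rewrite <- HB2; ring).
  apply Rmult_le_compat_l; [nra |].
  apply Rmult_le_compat; try lra; [nra |].
  apply Rmult_le_compat; try lra. nra.
Qed.

Lemma gamma_integrand_rem_near_infty x h t : 0 < x -> Rabs h <= x / 4 -> 1 <= t ->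
  Rabs (gamma_integrand_rem x h t) <= h ^ 2 * rpow_exp_const (x + 1 + x / 4) * exp (- t / 2).
Proof.
  intros Hx Hh Ht. eapply Rle_trans; [apply abs_gamma_integrand_rem_le |].
  destruct (ln_bounds_ge_1 t Ht) as [Hl0 Hlt].
  rewrite (Rabs_pos_eq (ln t)) by lra.
  assert (Hln2 : ln t ^ 2 <= Rpower t 2).
  { replace (Rpower t 2) with (Rpower t (INR 2)) by (simpl; f_equal; ring). rewrite Rpower_pow by lra.
    apply pow_incr. lra. }
  assert (Hexp : exp (Rabs h * ln t) <= Rpower t (x / 4)).
  { apply exp_le_exp_of_le. pose proof (Rabs_pos h). nra. }
  assert (Hpow : gamma_integrand x t * Rpower t 2 * Rpower t (x / 4)
                 = Rpower t (x + 1 + x / 4) * exp (- t)).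
  { unfold gamma_integrand.
    replace (x + 1 + x / 4) with ((x - 1) + 2 + x / 4) by field.
    rewrite !Rpower_plus. ring. }
  pose proof (gamma_integrand_pos x t). pose proof (exp_pos (Rabs h * ln t)).
  pose proof (Rpower_mul_exp_le (x + 1 + x / 4) t Ht).
  apply Rle_trans with (h ^ 2 * (Rpower t (x + 1 + x / 4) * exp (- t))).
  - apply Rmult_le_compat_l; [apply pow2_ge_0 |]. rewrite <- Hpow.
    apply Rmult_le_compat; nra.
  - rewrite (Rmult_assoc (h ^ 2)). apply Rmult_le_compat_l; [apply pow2_ge_0 | exact H1].
Qed.

Lemma dominated_gamma_integrand_rem x h : 0 < x -> Rabs h <= x / 4 ->
  dominated (gamma_integrand_rem x h) (h ^ 2 * (64 / x ^ 2 + rpow_exp_const (x + 1 + x / 4))) (x / 2).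
Proof.
  intros Hx Hh. pose proof (Rpower_pos (2 * (Rabs (x + 1 + x / 4) + 1)) (Rabs (x + 1 + x / 4) + 1)).
  fold (rpow_exp_const (x + 1 + x / 4)) in H.
  assert (H64 : 0 < 64 / x ^ 2) by (apply Rdiv_lt_0_compat; [lra | apply pow_lt; lra]).
  assert (Hh2 : 0 <= h ^ 2) by apply pow2_ge_0.
  split; [lra | apply Rmult_le_pos; lra | apply continuous_on_pos_gamma_integrand_rem | |];
    intros t Ht.
  - eapply Rle_trans; [apply gamma_integrand_rem_near_0; auto |].
    pose proof (Rpower_pos t (x / 2 - 1)).
    apply Rmult_le_compat_r; [lra |]. apply Rmult_le_compat_l; lra.
  - eapply Rle_trans; [apply gamma_integrand_rem_near_infty; auto |].
    pose proof (exp_pos (- t / 2)).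
    apply Rmult_le_compat_r; [lra |]. apply Rmult_le_compat_l; lra.
Qed.

Lemma is_lim_seq_0_of_INR_bound u :
  (forall eps, 0 < eps -> exists M, forall n, M <= INR n -> Rabs (u n) < eps) ->
  is_lim_seq u 0.
Proof.
  intros H. apply is_lim_seq_Reals. intros eps Heps. destruct (H eps Heps) as [M HM].
  destruct (INR_archimed 1 M Rlt_0_1) as [N HN]. rewrite Rmult_1_r in HN.
  exists N. intros n Hn. unfold R_dist. rewrite Rminus_0_r. apply HM.
  assert (INR N <= INR n) by (apply le_INR; lia). lra.
Qed.

Lemma is_lim_seq_le_loc_R u v (lu lv : R) : is_lim_seq u lu -> is_lim_seq v lv ->
  eventually (fun n => u n <= v n) -> lu <= lv.
Proof. intros Hu Hv Huv. exact (is_lim_seq_le_loc u v lu lv Huv Hu Hv). Qed.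

Lemma Gamma_is_RInt_gen x : 0 < x ->
  is_RInt_gen (gamma_integrand x) (at_right 0) (Rbar_locally p_infty) (Gamma x).
Proof.
  intros Hx.
  destruct (dominated_ex_RInt_gen _ _ _ (dominated_gamma_integrand x Hx)) as [l Hl].
  replace (Gamma x) with l; [exact Hl |]. symmetry. apply (is_RInt_gen_unique _ _ Hl).
Qed.

Lemma Gamma_lim_seq x : 0 < x ->
  is_lim_seq (fun n => RInt (gamma_integrand x) (cut_lo n) (cut_hi n)) (Gamma x).
Proof. intros Hx. apply is_RInt_gen_lim_seq, Gamma_is_RInt_gen, Hx. Qed.

Lemma Gamma_pos x : 0 < x -> 0 < Gamma x.
Proof.
  intros Hx.
  assert (Hc : 0 < RInt (gamma_integrand x) (/ 2) 2).
  { apply RInt_gt_0; [lra | intros; apply gamma_integrand_pos |].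
    intros t Ht. apply continuous_on_pos_gamma_integrand. lra. }
  enough (RInt (gamma_integrand x) (/ 2) 2 <= Gamma x) by lra.
  apply (is_lim_seq_le_loc_R _ _ _ _ (is_lim_seq_const _) (Gamma_lim_seq x Hx)).
  exists 1%nat. intros n Hn. assert (1 <= INR n) by (apply (le_INR 1); lia).
  apply RInt_subinterval_le; unfold cut_lo, cut_hi in *; try lra.
  - apply continuous_on_pos_gamma_integrand.
  - intros t _. left. apply gamma_integrand_pos.
  - apply Rinv_0_lt_compat. lra.
  - apply Rinv_le_contravar; lra.
Qed.

Lemma Rpower_plus_1 t p : 0 < t -> Rpower t (p + 1) = Rpower t p * t.
Proof. intros Ht. rewrite Rpower_plus, Rpower_1 by lra. reflexivity. Qed.

Lemma RInt_gamma_integrand_succ x a b : 0 < a -> 0 < b ->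
  RInt (gamma_integrand (x + 1)) a b =
  x * RInt (gamma_integrand x) a b + (gamma_integrand (x + 1) a - gamma_integrand (x + 1) b).
Proof.
  intros Ha Hb.
  assert (Hpos : forall t, Rmin a b <= t <= Rmax a b -> 0 < t).
  { intros t [Ht _]. unfold Rmin in Ht. destruct (Rle_dec a b); lra. }
  assert (Hparts : is_RInt (fun t => gamma_integrand (x + 1) t - x * gamma_integrand x t) a b
                     (minus (- gamma_integrand (x + 1) b) (- gamma_integrand (x + 1) a))).
  { apply (is_RInt_derive (fun t => - gamma_integrand (x + 1) t)).
    - intros t Ht. specialize (Hpos t Ht).
      unfold gamma_integrand. replace (x + 1 - 1) with ((x - 1) + 1) by ring.
      unfold Rpower. auto_derive; [lra |].
      change (exp ((x - 1 + 1) * ln t)) with (Rpower t (x - 1 + 1)).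
      rewrite Rpower_plus_1 by lra. unfold Rpower. field. lra.
    - intros t Ht. specialize (Hpos t Ht). unfold gamma_integrand, Rpower.
      apply (ex_derive_continuous (K := R_AbsRing) (V := R_NormedModule)). auto_derive. lra. }
  assert (Hex : forall y, ex_RInt (gamma_integrand y) a b)
    by (intros y; apply ex_RInt_pos; auto; apply continuous_on_pos_gamma_integrand).
  assert (Hlin : is_RInt (fun t => gamma_integrand (x + 1) t - x * gamma_integrand x t) a b
                   (RInt (gamma_integrand (x + 1)) a b - x * RInt (gamma_integrand x) a b))
    by exact (is_RInt_minus _ _ _ _ _ _ (RInt_correct _ _ _ (Hex (x + 1)))
                (is_RInt_scal _ _ _ x _ (RInt_correct _ _ _ (Hex x)))).
  apply (is_RInt_unique (V := R_CompleteNormedModule)) in Hparts, Hlin.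
  rewrite Hlin in Hparts. unfold minus, plus, opp in Hparts. simpl in Hparts. lra.
Qed.

Lemma lim_gamma_integrand_cut_lo x : 0 < x ->
  is_lim_seq (fun n => gamma_integrand (x + 1) (cut_lo n)) 0.
Proof.
  intros Hx. apply is_lim_seq_0_of_INR_bound. intros eps Heps.
  set (c := exp (ln eps / x)). assert (Hc : 0 < c) by apply exp_pos.
  exists (/ c). intros n Hn. pose proof (cut_lo_pos n) as Ha. pose proof (pos_INR n).
  assert (Hac : cut_lo n < c).
  { unfold cut_lo. rewrite <- (Rinv_inv c).
    apply Rinv_lt_contravar; [apply Rmult_lt_0_compat; [apply Rinv_0_lt_compat |] |]; lra. }
  assert (Hln : x * ln (cut_lo n) < ln eps).
  { apply ln_increasing in Hac; auto. unfold c in Hac. rewrite ln_exp in Hac.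
    apply (Rmult_lt_compat_l x) in Hac; auto.
    replace (x * (ln eps / x)) with (ln eps) in Hac by (field; lra).
    exact Hac. }
  unfold gamma_integrand. replace (x + 1 - 1) with x by ring.
  rewrite Rabs_pos_eq by (left; apply Rmult_lt_0_compat; apply exp_pos).
  assert (Rpower (cut_lo n) x < eps) by (rewrite <- (exp_ln eps) by lra; apply exp_increasing, Hln).
  pose proof (exp_opp_le_1 (cut_lo n) ltac:(lra)). pose proof (exp_pos (- cut_lo n)).
  pose proof (Rpower_pos (cut_lo n) x). nra.
Qed.

Lemma lim_gamma_integrand_cut_hi x : is_lim_seq (fun n => gamma_integrand x (cut_hi n)) 0.
Proof.
  apply is_lim_seq_0_of_INR_bound. intros eps Heps.
  set (K := rpow_exp_const (x - 1)). assert (HK : 0 < K) by apply Rpower_pos.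
  exists (- 2 * ln (eps / K)). intros n Hn.
  pose proof (Rpower_mul_exp_le (x - 1) (cut_hi n) (cut_hi_ge1 n)) as Hbound. fold K in Hbound.
  assert (Hexp : exp (- cut_hi n / 2) < eps / K).
  { rewrite <- (exp_ln (eps / K)) by (apply Rdiv_lt_0_compat; auto).
    apply exp_increasing. unfold cut_hi. lra. }
  apply (Rmult_lt_compat_l K) in Hexp; auto.
  replace (K * (eps / K)) with eps in Hexp by (field; lra).
  unfold gamma_integrand in *.
  rewrite Rabs_pos_eq by (left; apply Rmult_lt_0_compat; apply exp_pos). lra.
Qed.

Lemma Gamma_succ x : 0 < x -> Gamma (x + 1) = x * Gamma x.
Proof.
  intros Hx.
  assert (Hlim : is_lim_seq (fun n => x * RInt (gamma_integrand x) (cut_lo n) (cut_hi n) +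
                   (gamma_integrand (x + 1) (cut_lo n) - gamma_integrand (x + 1) (cut_hi n)))
                   (x * Gamma x + (0 - 0))).
  { apply is_lim_seq_plus'; [apply (is_lim_seq_scal_l _ x (Gamma x)), Gamma_lim_seq, Hx |].
    apply is_lim_seq_minus'; [apply lim_gamma_integrand_cut_lo, Hx |].
    apply lim_gamma_integrand_cut_hi. }
  apply (is_lim_seq_ext _ (fun n => RInt (gamma_integrand (x + 1)) (cut_lo n) (cut_hi n))) in Hlim.
  - apply is_lim_seq_unique in Hlim.
    rewrite (is_lim_seq_unique _ _ (Gamma_lim_seq (x + 1) ltac:(lra))) in Hlim.
    injection Hlim. lra.
  - intros n. symmetry. apply RInt_gamma_integrand_succ; [apply cut_lo_pos |].
    pose proof (cut_hi_ge1 n). lra.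
Qed.

Lemma is_derive_of_quadratic_remainder (F : R -> R) x l C d : 0 < d ->
  (forall h, Rabs h <= d -> Rabs (F (x + h) - F x - h * l) <= C * h ^ 2) ->
  is_derive F x l.
Proof.
  intros Hd HF. apply is_derive_Reals. intros eps Heps.
  set (C' := Rabs C + 1). assert (HC' : 0 < C') by (unfold C'; pose proof (Rabs_pos C); lra).
  assert (Hdelta : 0 < Rmin d (eps / C')) by (apply Rmin_pos; [| apply Rdiv_lt_0_compat]; lra).
  exists (mkposreal _ Hdelta). intros h Hh0 Hh. simpl in Hh.
  pose proof (Rmin_l d (eps / C')). pose proof (Rmin_r d (eps / C')).
  assert (Hah : 0 < Rabs h) by (apply Rabs_pos_lt; auto).
  specialize (HF h ltac:(lra)). rewrite <- (pow2_abs h) in HF.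
  assert (HCh : C' * Rabs h < eps).
  { apply Rlt_le_trans with (C' * (eps / C')); [apply Rmult_lt_compat_l; lra |].
    right. field. lra. }
  assert (C * Rabs h ^ 2 <= C' * Rabs h * Rabs h).
  { unfold C'. pose proof (Rle_abs C). simpl. nra. }
  replace ((F (x + h) - F x) / h - l) with ((F (x + h) - F x - h * l) / h) by (field; auto).
  unfold Rdiv. rewrite Rabs_mult, Rabs_inv.
  apply (Rmult_lt_reg_r (Rabs h)); auto.
  rewrite Rmult_assoc, Rinv_l, Rmult_1_r by lra. nra.
Qed.

Lemma RInt_gamma_integrand_rem x h a b : 0 < a -> 0 < b ->
  RInt (gamma_integrand_rem x h) a b = RInt (gamma_integrand (x + h)) a b
    - RInt (gamma_integrand x) a b - h * RInt (gamma_integrand_dx x) a b.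
Proof.
  intros Ha Hb.
  assert (Hex : forall y, ex_RInt (gamma_integrand y) a b)
    by (intros y; apply ex_RInt_pos; auto; apply continuous_on_pos_gamma_integrand).
  assert (Hexdx : ex_RInt (gamma_integrand_dx x) a b)
    by (apply ex_RInt_pos; auto; apply continuous_on_pos_gamma_integrand_dx).
  apply (is_RInt_unique (V := R_CompleteNormedModule)).
  exact (is_RInt_minus _ _ _ _ _ _
           (is_RInt_minus _ _ _ _ _ _ (RInt_correct _ _ _ (Hex (x + h))) (RInt_correct _ _ _ (Hex x)))
           (is_RInt_scal _ _ _ h _ (RInt_correct _ _ _ Hexdx))).
Qed.

Lemma Gamma_remainder_le x h l : 0 < x -> Rabs h <= x / 4 ->
  is_RInt_gen (gamma_integrand_dx x) (at_right 0) (Rbar_locally p_infty) l ->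
  Rabs (Gamma (x + h) - Gamma x - h * l) <=
  (64 / x ^ 2 + rpow_exp_const (x + 1 + x / 4)) * (/ (x / 2) + 2) * h ^ 2.
Proof.
  intros Hx Hh Hl.
  assert (Hxh : 0 < x + h) by (pose proof (Rle_abs (- h)); rewrite Rabs_Ropp in *; lra).
  assert (Hlim : is_lim_seq (fun n => RInt (gamma_integrand_rem x h) (cut_lo n) (cut_hi n))
                   (Gamma (x + h) - Gamma x - h * l)).
  { apply (is_lim_seq_ext (fun n => RInt (gamma_integrand (x + h)) (cut_lo n) (cut_hi n)
             - RInt (gamma_integrand x) (cut_lo n) (cut_hi n)
             - h * RInt (gamma_integrand_dx x) (cut_lo n) (cut_hi n))).
    - intros n. symmetry. apply RInt_gamma_integrand_rem; [apply cut_lo_pos |].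
      pose proof (cut_hi_ge1 n). lra.
    - apply is_lim_seq_minus'; [apply is_lim_seq_minus'; apply Gamma_lim_seq; lra |].
      apply (is_lim_seq_scal_l _ h l), is_RInt_gen_lim_seq, Hl. }
  apply (is_lim_seq_le_loc_R _ _ _ _ (is_lim_seq_abs _ _ Hlim) (is_lim_seq_const _)).
  exists 0%nat. intros n _.
  replace ((64 / x ^ 2 + rpow_exp_const (x + 1 + x / 4)) * (/ (x / 2) + 2) * h ^ 2)
    with (h ^ 2 * (64 / x ^ 2 + rpow_exp_const (x + 1 + x / 4)) * (/ (x / 2) + 2)) by ring.
  apply (abs_RInt_dominated_le _ _ _ (dominated_gamma_integrand_rem x h Hx Hh));
    [apply cut_lo_pos | apply cut_lo_le_hi].
Qed.

Lemma Gamma_derivable x : 0 < x -> is_derive Gamma x (Derive Gamma x).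
Proof.
  intros Hx.
  destruct (dominated_ex_RInt_gen _ _ _ (dominated_gamma_integrand_dx x Hx)) as [l Hl].
  assert (Hd : is_derive Gamma x l).
  { apply (is_derive_of_quadratic_remainder _ _ _
      ((64 / x ^ 2 + rpow_exp_const (x + 1 + x / 4)) * (/ (x / 2) + 2)) (x / 4)); [lra |].
    intros h Hh. apply Gamma_remainder_le; auto. }
  rewrite (is_derive_unique _ _ _ Hd). exact Hd.
Qed.

(** * Log-convexity of Gamma and the digamma function *)

(* Cauchy-Schwarz: [f - 2 c g + c^2 k >= 0] pointwise, for [c = RInt g / RInt k]. *)
Lemma RInt_sqr_le_mul (f g k : R -> R) a b : a <= b ->
  ex_RInt f a b -> ex_RInt g a b -> ex_RInt k a b -> 0 < RInt k a b ->
  (forall t, a < t < b -> 0 < k t /\ g t ^ 2 <= f t * k t) ->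
  RInt g a b ^ 2 <= RInt f a b * RInt k a b.
Proof.
  intros Hab Hf Hg Hk HC Hfgk.
  set (A := RInt f a b : R). set (B := RInt g a b : R). set (C := RInt k a b : R).
  set (c := B / C). change (0 < C) in HC.
  assert (Hq : is_RInt (fun t => f t - 2 * c * g t + c ^ 2 * k t) a b (A - 2 * c * B + c ^ 2 * C))
    by exact (is_RInt_plus _ _ _ _ _ _
                (is_RInt_minus _ _ _ _ _ _ (RInt_correct _ _ _ Hf)
                   (is_RInt_scal _ _ _ (2 * c) _ (RInt_correct _ _ _ Hg)))
                (is_RInt_scal _ _ _ (c ^ 2) _ (RInt_correct _ _ _ Hk))).
  assert (Hq0 : 0 <= A - 2 * c * B + c ^ 2 * C).
  { rewrite <- (is_RInt_unique _ _ _ _ Hq).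
    apply RInt_ge_0; [exact Hab | eexists; exact Hq |].
    intros t Ht. destruct (Hfgk t Ht) as [Hkt Hgt].
    assert (0 <= k t * (f t - 2 * c * g t + c ^ 2 * k t)).
    { replace (k t * (f t - 2 * c * g t + c ^ 2 * k t))
        with ((f t * k t - g t ^ 2) + (g t - c * k t) ^ 2) by ring.
      pose proof (pow2_ge_0 (g t - c * k t)). lra. }
    nra. }
  replace (A - 2 * c * B + c ^ 2 * C) with ((A * C - B ^ 2) / C) in Hq0 by (unfold c; field; lra).
  apply (Rmult_le_compat_r C) in Hq0; [| lra].
  replace ((A * C - B ^ 2) / C * C) with (A * C - B ^ 2) in Hq0 by (field; lra). lra.
Qed.

Lemma Gamma_midpoint_sqr_le x y : 0 < x -> 0 < y -> Gamma ((x + y) / 2) ^ 2 <= Gamma x * Gamma y.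
Proof.
  intros Hx Hy. set (m := (x + y) / 2). assert (Hm : 0 < m) by (unfold m; lra).
  set (I z n := RInt (gamma_integrand z) (cut_lo n) (cut_hi n)).
  replace (Gamma m ^ 2) with (Gamma m * Gamma m) by ring.
  apply (is_lim_seq_le_loc_R (fun n => I m n * I m n) (fun n => I x n * I y n)).
  - apply is_lim_seq_mult'; apply Gamma_lim_seq, Hm.
  - apply is_lim_seq_mult'; apply Gamma_lim_seq; auto.
  - exists 1%nat. intros n Hn. assert (1 <= INR n) by (apply (le_INR 1); lia).
    assert (Hlt : cut_lo n < cut_hi n).
    { unfold cut_lo, cut_hi. apply Rlt_le_trans with 1; [| lra].
      rewrite <- Rinv_1. apply Rinv_lt_contravar; lra. }
    pose proof (cut_lo_pos n).
    assert (Hex : forall z, ex_RInt (gamma_integrand z) (cut_lo n) (cut_hi n))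
      by (intros z; apply ex_RInt_pos; try apply continuous_on_pos_gamma_integrand; lra).
    replace (I m n * I m n) with (I m n ^ 2) by ring. unfold I.
    apply RInt_sqr_le_mul; auto; [lra | |].
    + apply RInt_gt_0; auto; [intros; apply gamma_integrand_pos |].
      intros t Ht. apply continuous_on_pos_gamma_integrand. lra.
    + intros t Ht. split; [apply gamma_integrand_pos |]. right.
      unfold gamma_integrand, Rpower. simpl. rewrite Rmult_1_r, <- !exp_plus.
      f_equal. unfold m. field.
Qed.

Lemma ln_Gamma_midpoint_convex u v : 0 < u -> 0 < v ->
  2 * ln (Gamma ((u + v) / 2)) <= ln (Gamma u) + ln (Gamma v).
Proof.
  intros Hu Hv. pose proof (Gamma_pos u Hu). pose proof (Gamma_pos v Hv).
  pose proof (Gamma_pos ((u + v) / 2) ltac:(lra)).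
  replace 2 with (INR 2) at 1 by (simpl; ring).
  rewrite <- ln_mult, <- ln_pow by auto.
  apply ln_le; [apply pow_lt; lra | apply Gamma_midpoint_sqr_le; lra].
Qed.

Lemma digamma_succ x : 0 < x -> digamma (x + 1) = digamma x + 1 / x.
Proof.
  intros Hx.
  assert (Hshift : is_derive (fun y => Gamma (y + 1)) x (Derive Gamma (x + 1))).
  { replace (Derive Gamma (x + 1)) with (1 * Derive Gamma (x + 1)) by ring.
    apply (is_derive_comp Gamma (fun y => y + 1)); [apply Gamma_derivable; lra |].
    auto_derive; [easy | ring]. }
  assert (Hprod : is_derive (fun y => Gamma (y + 1)) x (Gamma x + x * Derive Gamma x)).
  { apply (is_derive_ext_loc (fun y => y * Gamma y)).
    - exists (mkposreal x Hx). intros y Hy. change (Rabs (y - x) < x) in Hy.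
      apply Rabs_lt_between in Hy. symmetry. apply Gamma_succ. lra.
    - replace (Gamma x + x * Derive Gamma x) with (1 * Gamma x + x * Derive Gamma x) by ring.
      apply (is_derive_mult (fun y => y) Gamma); [auto_derive; auto; ring | apply Gamma_derivable, Hx |].
      intros; apply Rmult_comm. }
  pose proof (is_derive_unique _ _ _ Hprod) as Hderiv.
  rewrite (is_derive_unique _ _ _ Hshift) in Hderiv.
  unfold digamma. rewrite Hderiv, Gamma_succ by auto.
  pose proof (Gamma_pos x Hx). field. lra.
Qed.


Section MidpointConvex.

Variable g : R -> R.
Hypothesis g_midpoint_convex :
  forall u v, 0 < u -> 0 < v -> 2 * g ((u + v) / 2) <= g u + g v.

Lemma midpoint_convex_increment_le x h k : 0 < x -> 0 < h ->
  g (x + h) - g x <= g (x + INR k * h + h) - g (x + INR k * h).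
Proof.
  intros Hx Hh. induction k as [| k IHk].
  - simpl. rewrite Rmult_0_l, Rplus_0_r. lra.
  - rewrite S_INR. pose proof (pos_INR k).
    pose proof (g_midpoint_convex (x + INR k * h) (x + INR k * h + h + h) ltac:(nra) ltac:(nra)).
    replace ((x + INR k * h + (x + INR k * h + h + h)) / 2) with (x + INR k * h + h) in H0 by field.
    replace (x + (INR k + 1) * h) with (x + INR k * h + h) by ring. lra.
Qed.

Lemma midpoint_convex_derive_le x y dx dy : 0 < x -> x <= y ->
  is_derive g x dx -> is_derive g y dy -> dx <= dy.
Proof.
  intros Hx Hxy Hdx Hdy.
  destruct (Rle_lt_or_eq_dec x y Hxy) as [Hlt | <-].
  2: { rewrite <- (is_derive_unique _ _ _ Hdx), <- (is_derive_unique _ _ _ Hdy). lra. }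
  apply Rnot_lt_le. intros Hgt.
  set (eps := (dx - dy) / 2). assert (He : 0 < eps) by (unfold eps; lra).
  apply is_derive_Reals in Hdx, Hdy.
  destruct (Hdx eps He) as [dlx Hqx]. destruct (Hdy eps He) as [dly Hqy].
  pose proof (Rmin_l dlx dly). pose proof (Rmin_r dlx dly). set (d := Rmin dlx dly) in *.
  assert (Hd : 0 < d) by (apply Rmin_pos; apply cond_pos).
  destruct (INR_archimed d (y - x) Hd) as [N HN].
  pose proof (pos_INR N). set (h := (y - x) / (INR N + 1)).
  assert (Hh : 0 < h) by (apply Rdiv_lt_0_compat; lra).
  assert (Hhd : h < d).
  { apply (Rmult_lt_reg_r (INR N + 1)); [lra |]. unfold h.
    replace ((y - x) / (INR N + 1) * (INR N + 1)) with (y - x) by (field; lra). nra. }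
  assert (Hy : x + INR (S N) * h = y) by (unfold h; rewrite S_INR; field; lra).
  pose proof (midpoint_convex_increment_le x h (S N) Hx Hh) as Hincr. rewrite Hy in Hincr.
  assert (Habs : Rabs h < d) by (rewrite Rabs_pos_eq; lra).
  specialize (Hqx h ltac:(lra) ltac:(lra)). specialize (Hqy h ltac:(lra) ltac:(lra)).
  apply Rabs_lt_between in Hqx, Hqy.
  assert ((g (x + h) - g x) / h <= (g (y + h) - g y) / h)
    by (apply Rmult_le_compat_r; [left; apply Rinv_0_lt_compat |]; lra).
  unfold eps in *. lra.
Qed.

End MidpointConvex.

Lemma is_derive_ln_Gamma x : 0 < x -> is_derive (fun t => ln (Gamma t)) x (digamma x).
Proof.
  intros Hx. unfold digamma, Rdiv.
  apply (is_derive_comp ln Gamma); [apply is_derive_ln, Gamma_pos | apply Gamma_derivable]; exact Hx.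
Qed.

Lemma digamma_le x y : 0 < x -> x <= y -> digamma x <= digamma y.
Proof.
  intros Hx Hxy.
  apply (midpoint_convex_derive_le (fun t => ln (Gamma t)) ln_Gamma_midpoint_convex x y);
    auto; apply is_derive_ln_Gamma; lra.
Qed.

(** * Matsuoka's bound for the Basel sum *)

Definition wallis (n : nat) : R := RInt (fun t => cos t ^ (2 * n)) 0 (PI / 2).
Definition wallis_x2 (n : nat) : R := RInt (fun t => t ^ 2 * cos t ^ (2 * n)) 0 (PI / 2).

Lemma ex_RInt_wallis n : ex_RInt (fun t => cos t ^ (2 * n)) 0 (PI / 2).
Proof.
  apply (ex_RInt_continuous (V := R_CompleteNormedModule)). intros t _.
  apply (ex_derive_continuous (K := R_AbsRing) (V := R_NormedModule)). auto_derive. easy.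
Qed.

Lemma ex_RInt_wallis_x2 n : ex_RInt (fun t => t ^ 2 * cos t ^ (2 * n)) 0 (PI / 2).
Proof.
  apply (ex_RInt_continuous (V := R_CompleteNormedModule)). intros t _.
  apply (ex_derive_continuous (K := R_AbsRing) (V := R_NormedModule)). auto_derive. easy.
Qed.

Lemma cos_pow_2S n t : cos t ^ (2 * S n) = cos t ^ 2 * cos t ^ (2 * n).
Proof. replace (2 * S n)%nat with (2 + 2 * n)%nat by lia. apply pow_add. Qed.

Lemma sin_sqr t : sin t ^ 2 = 1 - cos t ^ 2.
Proof. rewrite <- !Rsqr_pow2. apply sin2. Qed.

(* [auto_derive] leaves the successor case of [INR] unfolded. *)
Lemma INR_S_match m : (match m with 0%nat => 1 | S _ => INR m + 1 end) = INR m + 1.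
Proof. destruct m; simpl; ring. Qed.

Lemma wallis_S n : (2 * INR n + 2) * wallis (S n) = (2 * INR n + 1) * wallis n.
Proof.
  assert (Hparts : is_RInt
      (fun t => cos t ^ 2 * cos t ^ (2 * n) - (2 * INR n + 1) * sin t ^ 2 * cos t ^ (2 * n)) 0 (PI / 2)
      (minus (sin (PI / 2) * cos (PI / 2) ^ S (2 * n)) (sin 0 * cos 0 ^ S (2 * n)))).
  { apply (is_RInt_derive (fun t => sin t * cos t ^ S (2 * n))).
    - intros t _. auto_derive; [easy |].
      rewrite INR_S_match. change (n + (n + 0))%nat with (2 * n)%nat.
      rewrite mult_INR. simpl (INR 2). ring.
    - intros t _. apply (ex_derive_continuous (K := R_AbsRing) (V := R_NormedModule)).
      auto_derive. easy. }
  assert (Hlin : is_RInt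
      (fun t => (2 * INR n + 2) * cos t ^ (2 * S n) - (2 * INR n + 1) * cos t ^ (2 * n)) 0 (PI / 2)
      ((2 * INR n + 2) * wallis (S n) - (2 * INR n + 1) * wallis n))
    by exact (is_RInt_minus _ _ _ _ _ _
                (is_RInt_scal _ _ _ _ _ (RInt_correct _ _ _ (ex_RInt_wallis (S n))))
                (is_RInt_scal _ _ _ _ _ (RInt_correct _ _ _ (ex_RInt_wallis n)))).
  assert (Hext : forall t, Rmin 0 (PI / 2) < t < Rmax 0 (PI / 2) ->
            (2 * INR n + 2) * cos t ^ (2 * S n) - (2 * INR n + 1) * cos t ^ (2 * n)
            = cos t ^ 2 * cos t ^ (2 * n) - (2 * INR n + 1) * sin t ^ 2 * cos t ^ (2 * n))
    by (intros t _; rewrite cos_pow_2S, sin_sqr; ring).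
  apply (is_RInt_ext _ _ _ _ _ Hext) in Hlin.
  apply (is_RInt_unique (V := R_CompleteNormedModule)) in Hparts, Hlin. rewrite Hlin in Hparts.
  rewrite cos_PI2, sin_0 in Hparts. unfold minus, plus, opp in Hparts. simpl in Hparts. lra.
Qed.

Lemma wallis_x2_S n :
  (INR n + 1) * (2 * INR n + 1) * wallis_x2 n = wallis (S n) + 2 * (INR n + 1) ^ 2 * wallis_x2 (S n).
Proof.
  set (F t := t * cos t ^ S (S (2 * n)) + (INR n + 1) * t ^ 2 * sin t * cos t ^ S (2 * n)).
  set (G t := cos t ^ 2 * cos t ^ (2 * n) + (INR n + 1) * t ^ 2 * cos t ^ 2 * cos t ^ (2 * n)
              - (INR n + 1) * (2 * INR n + 1) * t ^ 2 * sin t ^ 2 * cos t ^ (2 * n)).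
  assert (Hparts : is_RInt G 0 (PI / 2) (minus (F (PI / 2)) (F 0))).
  { apply (is_RInt_derive F).
    - intros t _. unfold F, G. auto_derive; [easy |].
      rewrite !INR_S_match. change (n + (n + 0))%nat with (2 * n)%nat.
      rewrite mult_INR. simpl (INR 2). ring.
    - intros t _. unfold G. apply (ex_derive_continuous (K := R_AbsRing) (V := R_NormedModule)).
      auto_derive. easy. }
  assert (HF : minus (F (PI / 2)) (F 0) = 0)
    by (unfold F, minus, plus, opp; simpl; rewrite cos_PI2; ring).
  assert (Hlin : is_RInt (fun t => cos t ^ (2 * S n) + 2 * (INR n + 1) ^ 2 * (t ^ 2 * cos t ^ (2 * S n))
                                   - (INR n + 1) * (2 * INR n + 1) * (t ^ 2 * cos t ^ (2 * n))) 0 (PI / 2)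
                   (wallis (S n) + 2 * (INR n + 1) ^ 2 * wallis_x2 (S n)
                    - (INR n + 1) * (2 * INR n + 1) * wallis_x2 n))
    by exact (is_RInt_minus _ _ _ _ _ _
                (is_RInt_plus _ _ _ _ _ _ (RInt_correct _ _ _ (ex_RInt_wallis (S n)))
                   (is_RInt_scal _ _ _ _ _ (RInt_correct _ _ _ (ex_RInt_wallis_x2 (S n)))))
                (is_RInt_scal _ _ _ _ _ (RInt_correct _ _ _ (ex_RInt_wallis_x2 n)))).
  assert (Hext : forall t, Rmin 0 (PI / 2) < t < Rmax 0 (PI / 2) ->
            cos t ^ (2 * S n) + 2 * (INR n + 1) ^ 2 * (t ^ 2 * cos t ^ (2 * S n))
            - (INR n + 1) * (2 * INR n + 1) * (t ^ 2 * cos t ^ (2 * n)) = G t)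
    by (intros t _; unfold G; rewrite cos_pow_2S, sin_sqr; ring).
  apply (is_RInt_ext _ _ _ _ _ Hext) in Hlin.
  apply (is_RInt_unique (V := R_CompleteNormedModule)) in Hparts, Hlin.
  rewrite Hlin, HF in Hparts. lra.
Qed.

Lemma wallis_pos n : 0 < wallis n.
Proof.
  pose proof PI_RGT_0. apply RInt_gt_0; [lra | |].
  - intros t Ht. apply pow_lt, cos_gt_0; lra.
  - intros t _. apply (ex_derive_continuous (K := R_AbsRing) (V := R_NormedModule)).
    auto_derive. easy.
Qed.

Lemma wallis_0 : wallis 0 = PI / 2.
Proof.
  unfold wallis. rewrite (RInt_ext _ (fun _ => 1)) by reflexivity.
  rewrite RInt_const. unfold scal. simpl. unfold mult. simpl. ring.
Qed.

Lemma wallis_x2_0 : wallis_x2 0 = PI ^ 3 / 24.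
Proof.
  assert (H : is_RInt (fun t => t ^ 2) 0 (PI / 2) (minus ((PI / 2) ^ 3 / 3) (0 ^ 3 / 3))).
  { apply (is_RInt_derive (fun t => t ^ 3 / 3)).
    - intros t _. auto_derive; [easy | field].
    - intros t _. apply (ex_derive_continuous (K := R_AbsRing) (V := R_NormedModule)).
      auto_derive. easy. }
  unfold wallis_x2. rewrite (RInt_ext _ (fun t => t ^ 2)) by (intros; simpl; ring).
  rewrite (is_RInt_unique _ _ _ _ H). unfold minus, plus, opp. simpl. field.
Qed.

Lemma div_3_le_sin t : 0 <= t <= PI / 2 -> t / 3 <= sin t.
Proof.
  intros Ht. pose proof PI_4. pose proof PI2_Rlt_PI.
  destruct (sin_bound t 0 ltac:(lra) ltac:(lra)) as [Hsin _].
  unfold sin_approx, sin_term in Hsin. simpl in Hsin. nra.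
Qed.

Lemma wallis_x2_le n : wallis_x2 n <= 9 * (wallis n - wallis (S n)).
Proof.
  assert (Hdiff : is_RInt (fun t => 9 * (cos t ^ (2 * n) - cos t ^ (2 * S n))) 0 (PI / 2)
                    (9 * (wallis n - wallis (S n))))
    by exact (is_RInt_scal _ _ _ _ _ (is_RInt_minus _ _ _ _ _ _
                (RInt_correct _ _ _ (ex_RInt_wallis n)) (RInt_correct _ _ _ (ex_RInt_wallis (S n))))).
  rewrite <- (is_RInt_unique _ _ _ _ Hdiff).
  pose proof PI_RGT_0. pose proof PI_4.
  apply RInt_le; [lra | apply ex_RInt_wallis_x2 | eexists; exact Hdiff |].
  intros t Ht. rewrite cos_pow_2S.
  pose proof (div_3_le_sin t ltac:(lra)).
  assert (Hc : 0 <= cos t ^ (2 * n)) by (apply pow_le; left; apply cos_gt_0; lra).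
  assert (t ^ 2 <= 9 * (1 - cos t ^ 2)) by (rewrite <- sin_sqr; nra).
  nra.
Qed.

Lemma wallis_ratio_sub_S n :
  wallis_x2 n / wallis n - wallis_x2 (S n) / wallis (S n) = 1 / (2 * (INR n + 1) ^ 2).
Proof.
  pose proof (wallis_S n). pose proof (wallis_x2_S n).
  pose proof (wallis_pos n). pose proof (wallis_pos (S n)). pose proof (pos_INR n).
  assert (HwS : wallis (S n) = (2 * INR n + 1) / (2 * INR n + 2) * wallis n)
    by (apply (Rmult_eq_reg_l (2 * INR n + 2)); [field_simplify |]; lra).
  assert (Hw2S : wallis_x2 (S n) =
                 ((INR n + 1) * (2 * INR n + 1) * wallis_x2 n - wallis (S n)) / (2 * (INR n + 1) ^ 2))
    by (apply (Rmult_eq_reg_l (2 * (INR n + 1) ^ 2)); [field_simplify |]; nra).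
  rewrite Hw2S, HwS. field. repeat split; nra.
Qed.

Fixpoint zeta2_partial (N : nat) : R :=
  match N with 0%nat => 0 | S k => zeta2_partial k + 1 / (INR k + 1) ^ 2 end.

Lemma zeta2_partial_wallis N :
  zeta2_partial N = 2 * (wallis_x2 0 / wallis 0 - wallis_x2 N / wallis N).
Proof.
  induction N as [| N IHN]; cbn [zeta2_partial]; [ring |].
  rewrite IHN. pose proof (wallis_ratio_sub_S N). pose proof (pos_INR N).
  assert (1 / (INR N + 1) ^ 2 = 2 * (1 / (2 * (INR N + 1) ^ 2))) by (field; lra).
  lra.
Qed.

Lemma PI_sqr_div_6_le N : PI ^ 2 / 6 <= zeta2_partial N + 9 / (INR N + 1).
Proof.
  pose proof PI_RGT_0. pose proof (pos_INR N).
  pose proof (wallis_pos N). pose proof (wallis_x2_le N). pose proof (wallis_S N).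
  assert (Hratio : wallis_x2 N / wallis N <= 9 / (2 * INR N + 2)).
  { apply (Rmult_le_reg_r (wallis N)); auto.
    replace (wallis_x2 N / wallis N * wallis N) with (wallis_x2 N) by (field; lra).
    replace (9 / (2 * INR N + 2) * wallis N)
      with (9 * (wallis N - (2 * INR N + 1) / (2 * INR N + 2) * wallis N)) by (field; lra).
    replace ((2 * INR N + 1) / (2 * INR N + 2) * wallis N) with (wallis (S N))
      by (apply (Rmult_eq_reg_l (2 * INR N + 2)); [field_simplify |]; lra).
    assumption. }
  rewrite zeta2_partial_wallis, wallis_0, wallis_x2_0.
  replace (PI ^ 3 / 24 / (PI / 2)) with (PI ^ 2 / 12) by (field; lra).
  replace (9 / (INR N + 1)) with (2 * (9 / (2 * INR N + 2))) by (field; lra). lra.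
Qed.

(** * The series for psi (1 + a) - psi 1 *)

Fixpoint digamma_shift_sum (a : R) (N : nat) : R :=
  match N with
  | 0%nat => 0
  | S k => digamma_shift_sum a k + a / ((INR k + 1) * (INR k + 1 + a))
  end.

Lemma digamma_shift_telescope a N : 0 < a ->
  digamma (a + 1) - digamma 1 =
  digamma_shift_sum a N + (digamma (INR N + 1 + a) - digamma (INR N + 1)).
Proof.
  intros Ha. induction N as [| N IHN].
  - simpl. rewrite !Rplus_0_l, (Rplus_comm 1 a). ring.
  - rewrite IHN. cbn [digamma_shift_sum]. rewrite S_INR. pose proof (pos_INR N).
    replace (INR N + 1 + 1 + a) with (INR N + 1 + a + 1) by ring.
    rewrite (digamma_succ (INR N + 1 + a)), (digamma_succ (INR N + 1)) by lra. field. lra.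
Qed.

Lemma digamma_shift_tail_bounds a N : 0 <= a <= 1 ->
  0 <= digamma (INR N + 1 + a) - digamma (INR N + 1) <= 1 / (INR N + 1).
Proof.
  intros Ha. pose proof (pos_INR N). split.
  - pose proof (digamma_le (INR N + 1) (INR N + 1 + a) ltac:(lra) ltac:(lra)). lra.
  - pose proof (digamma_le (INR N + 1 + a) (INR N + 1 + 1) ltac:(lra) ltac:(lra)).
    rewrite digamma_succ in H0 by lra. lra.
Qed.

Lemma digamma_shift_sum_lower a N : 0 < a <= 1 ->
  a / (1 + a) + a * (1 / 2 - 1 / (INR N + 2)) <= digamma_shift_sum a (S N).
Proof.
  intros Ha. induction N as [| N IHN].
  - simpl. replace (a / ((0 + 1) * (0 + 1 + a))) with (a / (1 + a)) by (field; lra). lra.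
  - cbn [digamma_shift_sum] in *. rewrite S_INR. pose proof (pos_INR N).
    assert (a / (INR N + 2) - a / (INR N + 3) <= a / ((INR N + 1 + 1) * (INR N + 1 + 1 + a))).
    { replace (a / (INR N + 2) - a / (INR N + 3)) with (a / ((INR N + 2) * (INR N + 3))) by (field; lra).
      unfold Rdiv. apply Rmult_le_compat_l; [lra |]. apply Rinv_le_contravar; nra. }
    replace (a * (1 / 2 - 1 / (INR N + 1 + 2)))
      with (a * (1 / 2 - 1 / (INR N + 2)) + (a / (INR N + 2) - a / (INR N + 3))) by (field; lra).
    lra.
Qed.

Lemma shift_term_pair_le a k : 0 < a < 1 -> 1 <= k ->
  a / (k * (k + a)) + (1 - a) / (k + 1) ^ 2 <= 1 / k - 1 / (k + 1).
Proof.
  intros Ha Hk.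
  replace (1 / k - 1 / (k + 1)) with (a / (k * (k + a)) + (1 - a) / ((k + 1) * (k + a))) by (field; lra).
  apply Rplus_le_compat_l. unfold Rdiv. apply Rmult_le_compat_l; [lra |].
  apply Rinv_le_contravar; nra.
Qed.

(* The first two terms, paired as in [shift_term_pair_le], leave the slack [(1 - a)^2 / (4 (1 + a))]. *)
Lemma digamma_shift_sum_zeta2_upper a N : 0 < a < 1 ->
  digamma_shift_sum a (S N) + (1 - a) * (zeta2_partial (S (S N)) - 1)
  <= 1 - 1 / (INR N + 2) - (1 - a) ^ 2 / (4 * (1 + a)).
Proof.
  intros Ha. induction N as [| N IHN].
  - simpl. right. field. lra.
  - cbn [digamma_shift_sum zeta2_partial] in *. rewrite !S_INR in *. pose proof (pos_INR N).
    pose proof (shift_term_pair_le a (INR N + 1 + 1) Ha ltac:(lra)).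
    replace (INR N + 2) with (INR N + 1 + 1) in IHN by ring.
    replace (INR N + 1 + 2) with (INR N + 1 + 1 + 1) by ring.
    assert ((1 - a) * (1 / (INR N + 1 + 1 + 1) ^ 2) = (1 - a) / (INR N + 1 + 1 + 1) ^ 2)
      by (field; lra).
    lra.
Qed.

Lemma exists_inv_INR_lt eps : 0 < eps -> exists N, 1 / (INR N + 2) < eps.
Proof.
  intros He. destruct (INR_archimed 1 (/ eps) Rlt_0_1) as [N HN]. rewrite Rmult_1_r in HN.
  exists N. pose proof (pos_INR N). pose proof (Rinv_0_lt_compat eps He).
  unfold Rdiv. rewrite Rmult_1_l, <- (Rinv_inv eps).
  apply Rinv_lt_contravar; [apply Rmult_lt_0_compat |]; lra.
Qed.

Lemma digamma_shift_gt a : 0 < a < 1 -> a < digamma (a + 1) - digamma 1.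
Proof.
  intros Ha.
  destruct (exists_inv_INR_lt ((1 - a) / (2 * (1 + a)))) as [N HN];
    [apply Rdiv_lt_0_compat; lra |].
  rewrite (digamma_shift_telescope a (S N)) by lra.
  pose proof (digamma_shift_tail_bounds a (S N) ltac:(lra)).
  pose proof (digamma_shift_sum_lower a N ltac:(lra)).
  assert (a * (1 / (INR N + 2)) < a * ((1 - a) / (2 * (1 + a)))) by (apply Rmult_lt_compat_l; lra).
  assert (a / (1 + a) + a * (1 / 2) - a * ((1 - a) / (2 * (1 + a))) = a) by (field; lra).
  lra.
Qed.

Lemma digamma_shift_zeta2_lt a : 0 < a < 1 ->
  digamma (a + 1) - digamma 1 + (1 - a) * (PI ^ 2 / 6 - 1) < 1.
Proof.
  intros Ha.
  destruct (exists_inv_INR_lt ((1 - a) / (36 * (1 + a)))) as [N HN];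
    [apply Rdiv_lt_0_compat; lra |].
  rewrite (digamma_shift_telescope a (S N)) by lra.
  pose proof (digamma_shift_tail_bounds a (S N) ltac:(lra)) as [_ Htail].
  pose proof (digamma_shift_sum_zeta2_upper a N Ha).
  pose proof (PI_sqr_div_6_le (S (S N))) as Hzeta.
  rewrite !S_INR in *. pose proof (pos_INR N).
  replace (INR N + 1 + 1) with (INR N + 2) in * by ring.
  assert (9 / (INR N + 2 + 1) <= 9 * (1 / (INR N + 2))).
  { unfold Rdiv. rewrite Rmult_1_l. apply Rmult_le_compat_l; [lra |].
    apply Rinv_le_contravar; lra. }
  assert ((1 - a) * (PI ^ 2 / 6) <= (1 - a) * (zeta2_partial (S (S N)) + 9 * (1 / (INR N + 2))))
    by (apply Rmult_le_compat_l; lra).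
  assert ((1 - a) * (9 * (1 / (INR N + 2))) < (1 - a) * (9 * ((1 - a) / (36 * (1 + a)))))
    by (apply Rmult_lt_compat_l; lra).
  assert ((1 - a) * (9 * ((1 - a) / (36 * (1 + a)))) = (1 - a) ^ 2 / (4 * (1 + a)))
    by (field; lra).
  lra.
Qed.

Theorem lemma5p3 (a : R) (ha0 : 0 < a) (ha1 : a < 1) :
  (1 - a) * (1 / a + PI ^ 2 / 6 - 1) < digamma 1 - digamma a /\
  digamma 1 - digamma a < (1 - a) * (1 / a + 1).
Proof.
  assert (Hpsi : digamma 1 - digamma a = 1 / a - (digamma (a + 1) - digamma 1))
    by (rewrite digamma_succ by lra; ring).
  pose proof (digamma_shift_gt a (conj ha0 ha1)).
  pose proof (digamma_shift_zeta2_lt a (conj ha0 ha1)).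
  rewrite Hpsi.
  replace ((1 - a) * (1 / a + PI ^ 2 / 6 - 1)) with (1 / a - 1 + (1 - a) * (PI ^ 2 / 6 - 1))
    by (field; lra).
  replace ((1 - a) * (1 / a + 1)) with (1 / a - a) by (field; lra).
  lra.
Qed.
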